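(* In the model described in the context, suppose $\triangle C>0$, and let $Q$ be the set of symmetric forward-market equilibria. Let $\zeta_1=(M+1)\triangle C+\min\big(MN\triangle C,\ MNk+2M\sqrt{Nk\triangle C}\big)$. Then there exists $(f,x)\in Q$ with $y_j(f\mathbf1,x\mathbf1)=0$ if and only if $\alpha_x\le\zeta_1$. Furthermore, if $\alpha_x>(M+1)\triangle C$, then there is $\bar f$ such that, for $(f,x)\in Q$, $y_j(f\mathbf1,x\mathbf1)=0$ if and only if \[(f,x)\in S:=\Big\{(f,x)\in\mathbb{R}\times\mathbb{R}_+:\ x=\tfrac1M(\alpha_x-(\triangle C-f)),\ 0\le f\le\bar f\Big\},\] and $S\subseteq Q$; moreover $\bar f>0$ if $\alpha_x<\zeta_1$.
   Context: Model: $M\ge1$ leaders and $N\ge2$ followers; inverse demand $P(q)=\alpha-\beta q$, $\alpha,\beta>0$; leader marginal cost $C$, follower marginal cost $c$, $c\ge C>0$; follower capacity $k>0$. Leader $i$ produces $x_i\ge0$; follower $j$ takes forward position $f_j\in\mathbb{R}$ and spot production $y_j\in[0,k]$. Given $\mathbf f,\mathbf x$, the spot market is the game among followers where follower $j$ chooses $y_j\in[0,k]$ to maximize $P(\sum_ix_i+\sum_{j'}y_{j'})(y_j-f_j)-cy_j$; its unique Nash equilibrium is $\mathbf y(\mathbf f,\mathbf x)=(y_1(\mathbf f,\mathbf x),\dots,y_N(\mathbf f,\mathbf x))$. Follower $j$'s forward payoff is $(P(\sum_ix_i+\sum_{j'}y_{j'}(\mathbf f,\mathbf x))-c)y_j(\mathbf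 f,\mathbf x)$, maximized over $f_j\in\mathbb{R}$; leader $i$'s payoff is $(P(\sum_ix_i+\sum_{j'}y_{j'}(\mathbf f,\mathbf x))-C)x_i$, maximized over $x_i\in\mathbb{R}_+$. A Nash equilibrium of the forward market is $(\mathbf f,\mathbf x)$ where no leader or follower can strictly gain by a unilateral deviation. $Q=\{(f,x)\in\mathbb{R}\times\mathbb{R}_+:(f\mathbf1,x\mathbf1)\text{ is a Nash equilibrium}\}$. $\alpha_x=(\alpha-C)/\beta$, $\triangle C=(c-C)/\beta$. *)

From HB Require Import structures.
From mathcomp Require Import all_boot all_order all_algebra.
From mathcomp Require Import reals.
From Stdlib Require Import ClassicalEpsilon.
Set Implicit Arguments. Unset Strict Implicit. Unset Printing Implicit Defensive.
Import Order.TTheory GRing.Theory Num.Theory.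
Local Open Scope ring_scope.

Section Model.
Variable R : realType.
Variables (M N : nat) (alpha beta C c k : R).

Definition price (q : R) : R := alpha - beta * q.

Definition upd (n : nat) (v : 'I_n -> R) (j : 'I_n) (z : R) : 'I_n -> R :=
  fun j' => if j' == j then z else v j'.

Definition total (x : 'I_M -> R) (y : 'I_N -> R) : R :=
  \sum_(i < M) x i + \sum_(j < N) y j.

Definition spot_payoff (f : 'I_N -> R) (x : 'I_M -> R) (y : 'I_N -> R) (j : 'I_N) : R :=
  price (total x y) * (y j - f j) - c * y j.

Definition spot_NE (f : 'I_N -> R) (x : 'I_M -> R) (y : 'I_N -> R) : Prop :=
  (forall j, 0 <= y j <= k) /\
  (forall j z, 0 <= z <= k -> spot_payoff f x (upd y j z) j <= spot_payoff f x y j).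

(* y(f,x): the (unique) spot-market Nash equilibrium, selected by choice *)
Definition yspot (f : 'I_N -> R) (x : 'I_M -> R) : 'I_N -> R :=
  epsilon (inhabits (fun _ : 'I_N => (0 : R))) (spot_NE f x).

Definition follower_payoff (f : 'I_N -> R) (x : 'I_M -> R) (j : 'I_N) : R :=
  (price (total x (yspot f x)) - c) * yspot f x j.

Definition leader_payoff (f : 'I_N -> R) (x : 'I_M -> R) (i : 'I_M) : R :=
  (price (total x (yspot f x)) - C) * x i.

Definition forward_NE (f : 'I_N -> R) (x : 'I_M -> R) : Prop :=
  (forall i, 0 <= x i) /\
  (forall j (g : R), follower_payoff (upd f j g) x j <= follower_payoff f x j) /\
  (forall i (z : R), 0 <= z -> leader_payoff f (upd x i z) i <= leader_payoff f x i).

Definition inQ (f x : R) : Prop :=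
  0 <= x /\ forward_NE (fun _ => f) (fun _ => x).

Definition alpha_x : R := (alpha - C) / beta.
Definition dC : R := (c - C) / beta.

Definition zeta1 : R :=
  (M%:R + 1) * dC +
  Num.min (M%:R * N%:R * dC)
          (M%:R * N%:R * k + 2 * M%:R * Num.sqrt (N%:R * k * dC)).

End Model.

From Pilot Require Import Defs.
From HB Require Import structures.
From mathcomp Require Import all_boot all_order all_algebra.
From mathcomp Require Import reals.
From mathcomp Require Import ring lra.
From Stdlib Require Import ClassicalEpsilon.
Set Implicit Arguments. Unset Strict Implicit. Unset Printing Implicit Defensive.
Import Order.TTheory GRing.Theory Num.Theory.
Local Open Scope ring_scope.

(* For fixed forward positions and leader outputs the spot market has payoffs
   that are strictly concave in the own output, and its marginal profits form a
   strongly monotone operator; so its equilibrium is the unique solution of a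
   variational inequality.  At a symmetric profile it is the projection onto
   [0, k] of (alpha_x - dC - M x + f) / (N + 1), hence followers are idle iff
   alpha_x - dC - M x + f <= 0.  At such a profile a follower who lowers its
   forward position produces profitably unless alpha_x - dC - M x <= 0, and a
   leader who cuts its output to z makes the followers produce
   clamp ((x - z) / (N + 1)).  If alpha_x <= (M + 1) dC some idle profile has
   slack.  Otherwise the leaders' best response forces the kink
   M x = alpha_x - dC + f, and with mu = dC - f the leaders' no-deviation
   condition becomes mu <= x <= (N + 1) mu and x <= (sqrt mu + sqrt (N k))^2,
   the last bound coming from deviations that push the followers to capacity.
   In terms of f these are f <= fbar_share and f <= fbar_capacity, and both
   hold at f = 0 iff alpha_x <= zeta1. *)

Lemma sumr_upd (R : realType) n (v : 'I_n -> R) j z :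
  \sum_i upd v j z i = \sum_i v i - v j + z.
Proof.
rewrite (bigD1 j) //= [in RHS](bigD1 j) //= /upd eqxx.
rewrite (eq_bigr v) => [|i /negbTE ->] //.
lra.
Qed.

Lemma sumr_const_ord (R : pzSemiRingType) n (w : R) : \sum_(i < n) w = n%:R * w.
Proof. by rewrite sumr_const card_ord mulr_natl. Qed.

Lemma le0_of_step_bound (R : realFieldType) (A B : R) :
  0 <= B -> (forall t, 0 < t <= 1 -> t * A <= t ^+ 2 * B) -> A <= 0.
Proof.
move=> B0 h; rewrite leNgt; apply/negP => A0.
set t := A / (A + B).
have t0 : 0 < t by rewrite divr_gt0 //; lra.
have et : t * (A + B) = A by rewrite /t divfK //; apply: lt0r_neq0; lra.
have t1 : t <= 1 by nra.
have := h t; rewrite t0 t1 => /(_ isT) htB.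
have : 0 < t * t * A by apply: mulr_gt0 => //; apply: mulr_gt0.
nra.
Qed.

Lemma eq0_of_sum_monotone (R : realDomainType) n (u : 'I_n -> R) :
  (forall i, u i * \sum_l u l + u i ^+ 2 <= 0) -> forall j, u j = 0.
Proof.
move=> h j.
have hsum : \sum_i (u i * \sum_l u l + u i ^+ 2) <= 0 by apply: sumr_le0 => i _.
rewrite big_split /= -mulr_suml [X in _ + X](bigD1 j) //= in hsum.
have : 0 <= \sum_(i < n | i != j) u i ^+ 2 by apply: sumr_ge0 => i _; exact: sqr_ge0.
have : 0 <= (\sum_l u l) * (\sum_l u l) by rewrite -expr2 sqr_ge0.
have : 0 <= u j ^+ 2 by exact: sqr_ge0.
move=> h1 h2 h3; have /eqP : u j ^+ 2 = 0 by lra.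
by rewrite sqrf_eq0 => /eqP.
Qed.

Section QuadraticMaximum.
Variables (R : realFieldType) (q x l : R).
Hypothesis x_max : forall z, l <= z -> (q + x - z) * z <= q * x.

Lemma quad_max_le : l <= x -> q <= x.
Proof.
move=> lx; rewrite leNgt; apply/negP => xq.
have := @x_max ((q + x) / 2) ltac:(lra).
have : 0 < ((q - x) / 2) ^+ 2 by rewrite exprn_gt0 //; lra.
nra.
Qed.

Lemma quad_max_ge : l < x -> x <= q.
Proof.
move=> lx; rewrite leNgt; apply/negP => qx.
pose z := Num.max l ((q + x) / 2).
have [lz hz] : l <= z /\ (q + x) / 2 <= z by split; rewrite le_max lexx ?orbT.
have zx : z < x by rewrite gt_max lx /=; lra.
have := x_max lz; have : 0 < (x - z) * (z - q) by apply: mulr_gt0; lra.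
nra.
Qed.

End QuadraticMaximum.

Definition clamp (R : realDomainType) (k v : R) :=
  if v <= 0 then 0 else if v <= k then v else k.

Section Projection.
Context {R : realDomainType} {k : R}.

Lemma clamp_ge0 (v : R) : 0 <= k -> 0 <= clamp k v.
Proof. by rewrite /clamp => k0; case: ifP => // /negbT; rewrite -ltNge => /ltW; case: ifP. Qed.

Lemma clamp_le (v : R) : 0 <= k -> clamp k v <= k.
Proof. by rewrite /clamp => k0; case: ifP => // _; case: ifP. Qed.

Lemma clamp_proj (v z : R) : 0 <= z <= k -> (z - clamp k v) * (v - clamp k v) <= 0.
Proof.
move=> /andP[z0 zk]; rewrite /clamp; case: (leP v 0) => v0; last case: (leP v k) => vk.
- by rewrite !subr0; nra.
- by rewrite subrr mulr0.
- by nra.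
Qed.

Lemma clamp_eq0 {v : R} : v <= 0 -> clamp k v = 0.
Proof. by rewrite /clamp => ->. Qed.

Lemma clamp_gt0 {v : R} : 0 < k -> 0 < v -> 0 < clamp k v.
Proof. by rewrite /clamp => k0 v0; rewrite leNgt v0 /=; case: ifP. Qed.

Lemma clamp_id {v : R} : 0 < v <= k -> clamp k v = v.
Proof. by move=> /andP[v0 vk]; rewrite /clamp leNgt v0 vk. Qed.

Lemma clamp_max {v : R} : 0 <= k -> k < v -> clamp k v = k.
Proof. by move=> k0 kv; rewrite /clamp !leNgt kv (le_lt_trans k0 kv). Qed.

Lemma clamp_le_id {v : R} : 0 <= v -> clamp k v <= v.
Proof.
by rewrite /clamp => v0; case: ifP => // _; case: ifP => // /negbT; rewrite -ltNge => /ltW.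
Qed.

End Projection.

Definition spot_marginal (R : realType) (M N : nat) (alpha beta c : R)
    (f : 'I_N -> R) (x : 'I_M -> R) (y : 'I_N -> R) (j : 'I_N) :=
  alpha - c - beta * (\sum_i x i + \sum_i y i + y j - f j).

Section SpotMarket.
Context {R : realType} {M N : nat} {alpha beta c k : R}.
Hypothesis beta_gt0 : 0 < beta.

Lemma spot_payoff_upd (f : 'I_N -> R) (x : 'I_M -> R) y j z :
  spot_payoff alpha beta c f x (upd y j z) j - spot_payoff alpha beta c f x y j
  = (z - y j) * spot_marginal alpha beta c f x y j - beta * (z - y j) ^+ 2.
Proof.
by rewrite /spot_payoff /Defs.total sumr_upd /upd eqxx /spot_marginal /price; ring.
Qed.

(* Payoffs are strictly concave in the own strategy, so equilibria are the
   solutions of the variational inequality of the marginal profits. *)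
Lemma spot_NE_VI (f : 'I_N -> R) (x : 'I_M -> R) y : spot_NE alpha beta c k f x y <->
  (forall j, 0 <= y j <= k) /\
  (forall j z, 0 <= z <= k -> (z - y j) * spot_marginal alpha beta c f x y j <= 0).
Proof.
split=> [[hy hne]|[hy hvi]]; split=> // j z hz; last first.
  have := spot_payoff_upd f x y j z; have := hvi j z hz.
  have : 0 <= beta * (z - y j) ^+ 2 by rewrite mulr_ge0 ?sqr_ge0 ?ltW.
  lra.
apply: (le0_of_step_bound (B := beta * (z - y j) ^+ 2)).
  by rewrite mulr_ge0 ?sqr_ge0 ?ltW.
move=> t /andP[t0 t1]; have /andP[y0 yk] := hy j; case/andP: hz => z0 zk.
have hzt : 0 <= y j + t * (z - y j) <= k by apply/andP; split; nra.
have := hne j _ hzt; have := spot_payoff_upd f x y j (y j + t * (z - y j)).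
rewrite [_ + _ - y j]addrAC subrr add0r exprMn; lra.
Qed.

(* Summing the variational inequalities of two equilibria gives
   (sum_i delta_i)^2 + sum_i delta_i^2 <= 0 for delta = y - y'. *)
Lemma spot_NE_unique (f : 'I_N -> R) (x : 'I_M -> R) (y y' : 'I_N -> R) :
  spot_NE alpha beta c k f x y -> spot_NE alpha beta c k f x y' -> y =1 y'.
Proof.
move=> /spot_NE_VI[hy vi] /spot_NE_VI[hy' vi'] j; apply/eqP; rewrite -subr_eq0; apply/eqP.
move: j; apply: eq0_of_sum_monotone => i.
have := vi i _ (hy' i); have := vi' i _ (hy i).
rewrite /spot_marginal sumrB => h h'; rewrite -(pmulr_rle0 _ beta_gt0); lra.
Qed.

Lemma yspot_eq (f : 'I_N -> R) (x : 'I_M -> R) (y : 'I_N -> R) :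
  spot_NE alpha beta c k f x y -> yspot alpha beta c k f x =1 y.
Proof.
move=> H; have H0 : spot_NE alpha beta c k f x (yspot alpha beta c k f x).
  by rewrite /yspot; apply: epsilon_spec; exists y.
exact: spot_NE_unique H0 H.
Qed.

End SpotMarket.

Section LeaderDeviation.
Variables (R : realType) (a d m n k : R).

Local Notation cl := (clamp k).

(* Both sides are leader payoffs divided by beta, for a deviation to z against
   the other leaders at xc; the clamp term is the followers' spot reaction. *)
Definition leader_no_gain (fc xc : R) := forall z, 0 <= z ->
  (a - (m * xc - xc + z) - n * cl ((a - d - (m * xc - xc + z) + fc) / (n + 1))) * z
  <= (a - m * xc) * xc.

Definition idle_equilibrium (fc xc : R) := [/\ 0 <= xc, a - d - m * xc + fc <= 0,
  a - d - m * xc <= 0 & leader_no_gain fc xc].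

Lemma leader_no_gain_of_idle (fc xc : R) : 0 <= n -> 0 <= k ->
  (forall z, 0 <= z -> (a - m * xc + xc - z) * z <= (a - m * xc) * xc) ->
  leader_no_gain fc xc.
Proof.
move=> n0 k0 h z z0; set y := cl _; have := h z z0.
have : 0 <= n * y * z by rewrite !mulr_ge0 ?clamp_ge0.
lra.
Qed.

Lemma leader_no_gain_idle {fc xc : R} : 0 <= n -> leader_no_gain fc xc ->
  forall z, Num.max 0 (a - d - m * xc + fc + xc) <= z ->
  (a - m * xc + xc - z) * z <= (a - m * xc) * xc.
Proof.
move=> n0 h z; rewrite ge_max => /andP[z0 hz].
have y0 : (a - d - (m * xc - xc + z) + fc) / (n + 1) <= 0.
  by rewrite ler_pdivrMr ?mul0r; lra.
by have := h z z0; rewrite clamp_eq0 // mulr0 subr0; lra.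
Qed.

Lemma idle_equilibrium_interior : 0 <= m -> 0 <= n -> 0 <= k ->
  a <= (m + 1) * d -> exists fc xc, idle_equilibrium fc xc.
Proof.
move=> m0 n0 k0 ad; have [a0|a0] := leP 0 a.
  pose xc := a / (m + 1).
  have exc : xc * (m + 1) = a by rewrite divfK //; apply: lt0r_neq0; lra.
  have x0 : 0 <= xc by apply: divr_ge0; lra.
  have xd : xc <= d by rewrite -(@ler_pM2r _ (m + 1)) ?exc; lra.
  exists (d - 1 - xc), xc; split=> //; try lra.
  apply: (@leader_no_gain_of_idle (d - 1 - xc) xc n0 k0) => z _.
  by have := sqr_ge0 (z - xc); nra.
exists (d - 1 - a), 0; split=> //; try nra.
by apply: (@leader_no_gain_of_idle (d - 1 - a) 0 n0 k0) => z z0; nra.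
Qed.

Lemma idle_equilibrium_kink (fc xc : R) : 0 <= m -> 0 <= n -> 0 <= d ->
  (m + 1) * d < a -> idle_equilibrium fc xc -> m * xc = a - d + fc.
Proof.
move=> m0 n0 d0 ad [x0 hK hB /(leader_no_gain_idle n0) hL].
have a0 : 0 < a.
  have : 0 <= (m + 1) * d by apply: mulr_ge0; lra.
  lra.
have qx : a - m * xc <= xc by apply: quad_max_le hL _; rewrite ge_max x0; lra.
apply/eqP; rewrite eq_le; apply/andP; split; last lra.
rewrite leNgt; apply/negP => hK'.
have x_pos : 0 < xc by nra.
have : xc <= a - m * xc by apply: quad_max_ge hL _; rewrite gt_max x_pos; lra.
nra.
Qed.

Definition kink_no_gain (mu x : R) := forall z, 0 <= z ->
  (mu + x - z - n * cl ((x - z) / (n + 1))) * z <= mu * x.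

Definition capacity_no_gain (mu x : R) := forall u, 0 <= u <= x ->
  (mu - n * k + u) * (x - u) <= mu * x.

Lemma leader_no_gain_kinkE (fc xc : R) : m * xc = a - d + fc ->
  leader_no_gain fc xc <-> kink_no_gain (d - fc) xc.
Proof.
move=> e.
have E1 z : a - (m * xc - xc + z) = d - fc + xc - z by lra.
have E2 z : a - d - (m * xc - xc + z) + fc = xc - z by lra.
have E3 : a - m * xc = d - fc by lra.
by split=> h z /h; rewrite E1 E2 E3.
Qed.

Section KinkNoGain.
Context {mu x : R}.

Lemma kink_no_gainE : kink_no_gain mu x <->
  forall u, u <= x -> (mu + u - n * cl (u / (n + 1))) * (x - u) <= mu * x.
Proof.
have e u : x - (x - u) = u by ring.
have e' u : mu + x - (x - u) = mu + u by ring.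
split=> h u hu; have := h (x - u).
  by rewrite subr_ge0 => /(_ hu); rewrite e' e.
by rewrite e addrA => /(_ ltac:(lra)).
Qed.

Lemma kink_no_gain_le : 0 <= n -> 0 <= x -> kink_no_gain mu x -> mu <= x.
Proof.
move=> n0 x0 h; apply: (quad_max_le (l := x)) => // z xz.
have y0 : (x - z) / (n + 1) <= 0 by rewrite ler_pdivrMr ?mul0r; lra.
by have := h z ltac:(lra); rewrite clamp_eq0 // mulr0 subr0.
Qed.

Lemma kink_no_gain_share : 0 <= n -> 0 <= k -> 0 < x ->
  kink_no_gain mu x -> x <= (n + 1) * mu.
Proof.
move=> n0 k0 x0 /kink_no_gainE h; rewrite leNgt; apply/negP => hx.
pose u := Num.min x ((x - (n + 1) * mu) / 2).
have [u0 ux u2] : [/\ 0 < u, u <= x & u <= (x - (n + 1) * mu) / 2].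
  by rewrite lt_min x0 ge_min lexx ge_min lexx orbT; split=> //; lra.
pose w := u / (n + 1).
have ew : w * (n + 1) = u by rewrite divfK //; apply: lt0r_neq0; lra.
have w0 : 0 < w by apply: divr_gt0; lra.
have key : (mu + u - n * w) * (x - u) - mu * x = w * (x - (n + 1) * mu - u).
  by rewrite -ew; ring.
have : 0 <= n * (w - cl w) * (x - u).
  apply: mulr_ge0; last lra.
  by rewrite mulr_ge0 // subr_ge0 clamp_le_id // ltW.
have : 0 < w * (x - (n + 1) * mu - u) by rewrite mulr_gt0 //; lra.
have := h u ux; rewrite -/w; lra.
Qed.

Lemma kink_no_gain_capacity : 0 <= n -> 0 <= k ->
  kink_no_gain mu x -> capacity_no_gain mu x.
Proof.
move=> n0 k0 /kink_no_gainE h u /andP[u0 ux]; have := h u ux.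
have : 0 <= n * (k - cl (u / (n + 1))) * (x - u).
  by rewrite !mulr_ge0 // ?subr_ge0 ?clamp_le //; lra.
lra.
Qed.

Lemma kink_no_gain_of_bounds : 0 <= n -> 0 <= k ->
  mu <= x -> x <= (n + 1) * mu -> capacity_no_gain mu x -> kink_no_gain mu x.
Proof.
move=> n0 k0 mux xmu hC; apply/kink_no_gainE => u ux.
have [u0|u_pos] := leP u 0.
  rewrite clamp_eq0 ?mulr0 ?subr0; last by rewrite ler_pdivrMr ?mul0r; lra.
  have : 0 <= - u * (x - u - mu) by rewrite mulr_ge0 //; lra.
  lra.
pose w := u / (n + 1).
have ew : w * (n + 1) = u by rewrite divfK //; apply: lt0r_neq0; lra.
have w0 : 0 < w by apply: divr_gt0; lra.
rewrite -/w; have [wk|kw] := leP w k.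
  rewrite clamp_id ?w0 //.
  have -> : (mu + u - n * w) * (x - u) = mu * x + w * (x - (n + 1) * mu - u).
    by rewrite -ew; ring.
  have : w * (x - (n + 1) * mu - u) <= 0 by rewrite pmulr_rle0 //; lra.
  lra.
by rewrite clamp_max // addrAC; apply: hC; lra.
Qed.

Lemma kink_no_gainP : 0 <= n -> 0 <= k -> 0 < x ->
  kink_no_gain mu x <-> [/\ mu <= x, x <= (n + 1) * mu & capacity_no_gain mu x].
Proof.
move=> n0 k0 x0; split=> [h|[]]; last exact: kink_no_gain_of_bounds.
split; [exact: kink_no_gain_le (ltW x0) h | exact: kink_no_gain_share h |].
exact: kink_no_gain_capacity h.
Qed.

End KinkNoGain.

Lemma capacity_sqrtP (X T S : R) : 0 <= X -> 0 <= T -> 0 < S ->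
  (forall u, 0 <= u <= X ^+ 2 -> (T ^+ 2 - S ^+ 2 + u) * (X ^+ 2 - u) <= T ^+ 2 * X ^+ 2)
  <-> X <= T + S.
Proof.
move=> X0 T0 S0; split=> [h|XTS u /andP[u0 uX]].
  rewrite leNgt; apply/negP => TSX.
  have hu : 0 <= S * X <= X ^+ 2 by apply/andP; split; nra.
  have := h _ hu.
  have -> : (T ^+ 2 - S ^+ 2 + S * X) * (X ^+ 2 - S * X)
    = T ^+ 2 * X ^+ 2 + S * X * ((X - S) ^+ 2 - T ^+ 2) by ring.
  have : 0 < S * X * ((X - S) ^+ 2 - T ^+ 2) by rewrite !mulr_gt0 //; nra.
  lra.
have [XST|XST] := leP ((X - S) ^+ 2) (T ^+ 2).
  rewrite -subr_ge0.
  have -> : T ^+ 2 * X ^+ 2 - (T ^+ 2 - S ^+ 2 + u) * (X ^+ 2 - u)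
    = (u - S * X) ^+ 2 + u * (T ^+ 2 - (X - S) ^+ 2) by ring.
  by rewrite addr_ge0 ?sqr_ge0 // mulr_ge0 // subr_ge0.
have XTS' : X + T < S.
  rewrite ltNge; apply/negP => h.
  have := mulr_ge0 (_ : 0 <= T - (X - S)) (_ : 0 <= T + (X - S)); lra.
have : 0 < (S - X - T) * (S + X + T) by rewrite mulr_gt0 //; lra.
have : 0 <= X * T by rewrite mulr_ge0.
have : 0 <= T ^+ 2 * X ^+ 2 by rewrite mulr_ge0 ?sqr_ge0.
nra.
Qed.

Local Notation s := (Num.sqrt (n * k)).

Lemma capacity_no_gainP (mu x : R) : 0 < n -> 0 < k -> 0 <= mu -> 0 <= x ->
  capacity_no_gain mu x <-> x <= (Num.sqrt mu + s) ^+ 2.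
Proof.
move=> n0 k0 mu0 x0.
have s0 : 0 < s by rewrite sqrtr_gt0 mulr_gt0.
have -> : (x <= (Num.sqrt mu + s) ^+ 2) = (Num.sqrt x <= Num.sqrt mu + s).
  by rewrite -{1}(sqr_sqrtr x0) ler_sqr // nnegrE ?addr_ge0 ?sqrtr_ge0 // ltW.
have nk0 : 0 <= n * k by rewrite mulr_ge0 // ltW.
have := capacity_sqrtP (sqrtr_ge0 x) (sqrtr_ge0 mu) s0.
by rewrite (sqr_sqrtr mu0) (sqr_sqrtr x0) (sqr_sqrtr nk0).
Qed.

Lemma idle_equilibrium_kinkP (f x : R) : 0 < m -> 0 < n -> 0 < k -> 0 <= d ->
  (m + 1) * d < a ->
  idle_equilibrium f x <-> [/\ 0 <= f, m * x = a - d + f,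
    x <= (n + 1) * (d - f) & x <= (Num.sqrt (d - f) + s) ^+ 2].
Proof.
move=> m0 n0 k0 d0 ad.
have md0 : 0 <= m * d by rewrite mulr_ge0 // ltW.
have x_pos f' x' : 0 <= f' -> m * x' = a - d + f' -> 0 < x'.
  by move=> f0 e; rewrite -(pmulr_rgt0 _ m0) e; lra.
split=> [hE|[f0 e xs xc]].
  have e := idle_equilibrium_kink (ltW m0) (ltW n0) d0 ad hE.
  have [_ _ hB /(leader_no_gain_kinkE e)] := hE.
  have f0 : 0 <= f by lra.
  have x0 := x_pos _ _ f0 e.
  case/(kink_no_gainP (ltW n0) (ltW k0) x0) => _ xs /capacity_no_gainP hC.
  by split=> //; apply: hC => //; [nra | exact: ltW].
have x0 := x_pos _ _ f0 e.
have mu0 : 0 <= d - f by nra.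
have mux : d - f <= x by rewrite -(ler_pM2l m0) e; nra.
split; [exact: ltW | lra | lra |].
apply/(leader_no_gain_kinkE e)/(kink_no_gainP (ltW n0) (ltW k0) x0); split=> //.
exact/(capacity_no_gainP n0 k0 mu0 (ltW x0)).
Qed.

End LeaderDeviation.

Section Threshold.
Variables (R : realType) (a d m n k : R).

Local Notation s := (Num.sqrt (n * k)).

(* [zeta1 M N beta C c k] is convertible to [zeta (dC beta C c) M%:R N%:R k]. *)
Definition zeta := (m + 1) * d +
  Num.min (m * n * d) (m * n * k + 2 * m * Num.sqrt (n * k * d)).

Definition fbar_share := ((n + 1) * m * d + d - a) / (m * (n + 1) + 1).

(* The nonnegative root of t ^+ 2 + m * (t + s) ^+ 2 = a, when there is one. *)
Definition capacity_root :=
  (Num.sqrt ((m + 1) * a - m * s ^+ 2) - m * s) / (m + 1).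

Definition fbar_capacity := d - Num.max 0 capacity_root ^+ 2.

Definition fbar := Num.min fbar_share fbar_capacity.

Lemma capacity_root_factor (t : R) : 0 <= m -> 0 <= (m + 1) * a - m * s ^+ 2 ->
  t ^+ 2 + m * (t + s) ^+ 2 - a = (t - capacity_root) *
    ((m + 1) * t + Num.sqrt ((m + 1) * a - m * s ^+ 2) + m * s).
Proof.
move=> m0 D0; have := sqr_sqrtr D0; rewrite /capacity_root.
set r := Num.sqrt _ => hr.
have m1 : m + 1 != 0 by apply: lt0r_neq0; lra.
have -> : a = (r ^+ 2 + m * s ^+ 2) / (m + 1) by rewrite hr; field.
by field.
Qed.

Lemma capacity_root_le (t : R) : 0 < m -> 0 < n -> 0 < k -> 0 <= t ->
  (a <= t ^+ 2 + m * (t + s) ^+ 2) = (Num.max 0 capacity_root <= t).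
Proof.
move=> m0 n0 k0 t0; have s0 : 0 < s by rewrite sqrtr_gt0 mulr_gt0.
rewrite ge_max t0 /=; have [D0|D0] := leP 0 ((m + 1) * a - m * s ^+ 2).
  have W0 : 0 < (m + 1) * t + Num.sqrt ((m + 1) * a - m * s ^+ 2) + m * s.
    have := sqrtr_ge0 ((m + 1) * a - m * s ^+ 2); have := mulr_gt0 m0 s0; nra.
  by rewrite -subr_ge0 (capacity_root_factor _ (ltW m0) D0) pmulr_lge0 // subr_ge0.
have root0 : capacity_root <= 0.
  rewrite /capacity_root ltr0_sqrtr // sub0r ler_pdivrMr ?mul0r; last lra.
  by have := mulr_gt0 m0 s0; lra.
rewrite (le_trans root0 t0); apply/idP.
have : 0 <= m * t * (t + 2 * s) by rewrite !mulr_ge0 //; lra.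
have [a0|a0] := leP a 0; first by have := sqr_ge0 t; nra.
by have := mulr_gt0 m0 a0; nra.
Qed.

Lemma capacity_root_lt (t : R) : 0 < m -> 0 < n -> 0 < k -> 0 <= t ->
  a < t ^+ 2 + m * (t + s) ^+ 2 -> capacity_root < t.
Proof.
move=> m0 n0 k0 t0 h; have s0 : 0 < s by rewrite sqrtr_gt0 mulr_gt0.
have [D0|D0] := leP 0 ((m + 1) * a - m * s ^+ 2).
  have W0 : 0 < (m + 1) * t + Num.sqrt ((m + 1) * a - m * s ^+ 2) + m * s.
    have := sqrtr_ge0 ((m + 1) * a - m * s ^+ 2); have := mulr_gt0 m0 s0; nra.
  by move: h; rewrite -subr_gt0 (capacity_root_factor _ (ltW m0) D0) pmulr_lgt0 // subr_gt0.
apply: (lt_le_trans _ t0).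
rewrite /capacity_root ltr0_sqrtr // sub0r ltr_pdivrMr ?mul0r; last lra.
by have := mulr_gt0 m0 s0; lra.
Qed.

Lemma share_boundE (f x : R) : 0 < m -> 0 <= n -> m * x = a - d + f ->
  (x <= (n + 1) * (d - f)) = (f <= fbar_share).
Proof.
move=> m0 n0 e; have den : 0 < m * (n + 1) + 1 by have := mulr_ge0 (ltW m0) n0; lra.
by rewrite -(ler_pM2l m0) e /fbar_share ler_pdivlMr //; apply/idP/idP; lra.
Qed.

Lemma capacity_boundE (f x : R) : 0 < m -> 0 < n -> 0 < k -> f <= d ->
  m * x = a - d + f -> (x <= (Num.sqrt (d - f) + s) ^+ 2) = (f <= fbar_capacity).
Proof.
move=> m0 n0 k0 fd e; have df0 : 0 <= d - f by lra.
have t0 : 0 <= Num.max 0 capacity_root by rewrite le_max lexx.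
have := sqr_sqrtr df0; set t := Num.sqrt (d - f) => ht.
have -> : (x <= (t + s) ^+ 2) = (a <= t ^+ 2 + m * (t + s) ^+ 2).
  by rewrite -(ler_pM2l m0) e ht; apply/idP/idP; lra.
rewrite capacity_root_le ?sqrtr_ge0 // -ler_sqr ?nnegrE ?sqrtr_ge0 // ht.
by rewrite /fbar_capacity; apply/idP/idP; lra.
Qed.

Lemma kink_bounds_le_fbar (f x : R) : 0 < m -> 0 < n -> 0 < k -> 0 < x ->
  m * x = a - d + f ->
  (x <= (n + 1) * (d - f) /\ x <= (Num.sqrt (d - f) + s) ^+ 2) <-> f <= fbar.
Proof.
move=> m0 n0 k0 x0 e; rewrite /fbar le_min -(share_boundE m0 (ltW n0) e).
split=> [[xs xc]|/andP[xs fc]].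
  have fd : f <= d by nra.
  by rewrite xs -(capacity_boundE m0 n0 k0 fd e).
have fd : f <= d.
  by move: fc; rewrite /fbar_capacity; have := sqr_ge0 (Num.max 0 capacity_root); lra.
by rewrite (capacity_boundE m0 n0 k0 fd e).
Qed.

Lemma zetaE : 0 <= n -> 0 <= k -> 0 <= d ->
  zeta = (m + 1) * d + Num.min (m * n * d) (m * ((Num.sqrt d + s) ^+ 2 - d)).
Proof.
move=> n0 k0 d0; have nk0 : 0 <= n * k by rewrite mulr_ge0.
rewrite /zeta sqrtrM // sqrrD (sqr_sqrtr d0) (sqr_sqrtr nk0); congr (_ + Num.min _ _).
by ring.
Qed.

Lemma le_zeta_fbar : 0 < m -> 0 < n -> 0 < k -> 0 <= d -> (m + 1) * d < a ->
  a <= zeta <-> 0 <= fbar.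
Proof.
move=> m0 n0 k0 d0 ad; have md : 0 <= m * d by rewrite mulr_ge0 // ltW.
have e : m * ((a - d) / m) = a - d + 0 by rewrite addr0 mulrC divfK // lt0r_neq0.
have x0 : 0 < (a - d) / m by rewrite divr_gt0 //; lra.
rewrite -(kink_bounds_le_fbar m0 n0 k0 x0 e) !subr0 (zetaE (ltW n0) (ltW k0) d0) -lerBlDl le_min.
have E y : ((a - d) / m <= y) = (a - d <= m * y) by rewrite -(ler_pM2l m0) e addr0.
rewrite !E.
by split=> [/andP[]|[]]; [split | move=> *; apply/andP; split]; lra.
Qed.

Lemma fbar_gt0 : 0 < m -> 0 < n -> 0 < k -> 0 < d -> a < zeta -> 0 < fbar.
Proof.
move=> m0 n0 k0 d0; rewrite (zetaE (ltW n0) (ltW k0) (ltW d0)) -ltrBlDl lt_min => /andP[h1 h2].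
have sd := sqr_sqrtr (ltW d0).
rewrite /fbar lt_min; apply/andP; split.
  by rewrite /fbar_share divr_gt0 //; [lra | have := mulr_gt0 m0 n0; lra].
have : capacity_root < Num.sqrt d.
  by apply: capacity_root_lt; rewrite ?sqrtr_ge0 // sd; lra.
rewrite /fbar_capacity subr_gt0 -{2}sd ltr_sqr ?nnegrE ?le_max ?lexx ?sqrtr_ge0 //.
by rewrite gt_max sqrtr_gt0 d0.
Qed.

Lemma idle_equilibriumP (f x : R) : 0 < m -> 0 < n -> 0 < k -> 0 <= d ->
  (m + 1) * d < a ->
  idle_equilibrium a d m n k f x <-> 0 <= x /\ x = (a - (d - f)) / m /\ 0 <= f <= fbar.
Proof.
move=> m0 n0 k0 d0 ad; have md : 0 <= m * d by rewrite mulr_ge0 // ltW.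
have x_pos : 0 <= f -> m * x = a - d + f -> 0 < x.
  by move=> f0 e; rewrite -(pmulr_rgt0 _ m0) e; lra.
rewrite (idle_equilibrium_kinkP _ _ m0 n0 k0 d0 ad).
split=> [[f0 e xs xc]|[_ [ex /andP[f0 fb]]]].
  have fb := (kink_bounds_le_fbar m0 n0 k0 (x_pos f0 e) e).1 (conj xs xc).
  split; first exact/ltW/x_pos.
  split; last by rewrite f0.
  by rewrite (_ : a - (d - f) = x * m) ?mulfK ?lt0r_neq0 //; lra.
have e : m * x = a - d + f by rewrite ex mulrC divfK ?lt0r_neq0 //; lra.
have [xs xc] := (kink_bounds_le_fbar m0 n0 k0 (x_pos f0 e) e).2 fb.
by split.
Qed.

Lemma exists_idle_equilibriumP : 0 < m -> 0 < n -> 0 < k -> 0 < d ->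
  (exists f x, idle_equilibrium a d m n k f x) <-> a <= zeta.
Proof.
move=> m0 n0 k0 d0.
have [ad|ad] := leP a ((m + 1) * d).
  split=> _; last exact: idle_equilibrium_interior (ltW m0) (ltW n0) (ltW k0) ad.
  have := mulr_gt0 (mulr_gt0 m0 n0) d0; have := mulr_gt0 (mulr_gt0 m0 n0) k0.
  have := mulr_ge0 (ltW m0) (sqrtr_ge0 (n * k * d)).
  move=> *; apply: (le_trans ad); rewrite lerDl le_min; apply/andP; split; lra.
rewrite (le_zeta_fbar m0 n0 k0 (ltW d0) ad); split=> [[f [x]]|fb0].
  by case/(idle_equilibriumP _ _ m0 n0 k0 (ltW d0) ad) => _ [_ /andP[/le_trans]]; apply.
exists 0, ((a - (d - 0)) / m); apply/(idle_equilibriumP _ _ m0 n0 k0 (ltW d0) ad).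
split; last by rewrite lexx fb0.
by rewrite subr0 divr_ge0 ?ltW //; have := mulr_gt0 m0 d0; lra.
Qed.

End Threshold.

Section SymmetricProfiles.
Variables (R : realType) (M N : nat) (alpha beta C c k : R).
Hypotheses (beta_gt0 : 0 < beta) (k_gt0 : 0 < k).

Local Notation a := (alpha_x alpha beta C).
Local Notation d := (dC beta C c).
Local Notation Mr := (M%:R : R).
Local Notation Nr := (N%:R : R).

Let k_ge0 : 0 <= k. Proof. exact: ltW. Qed.
Let beta_neq0 : beta != 0. Proof. exact: lt0r_neq0. Qed.
Let Nr1_gt0 : 0 < Nr + 1. Proof. exact: ltr_wpDl (ler0n _ _) ltr01. Qed.

Lemma price_subC q : price alpha beta q - C = beta * (a - q).
Proof. by rewrite /price /alpha_x; field. Qed.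

Lemma price_subc q : price alpha beta q - c = beta * (a - d - q).
Proof. by rewrite /price /alpha_x /dC; field. Qed.

Lemma spot_NE_sym (fc : R) (x : 'I_M -> R) :
  spot_NE alpha beta c k (fun _ : 'I_N => fc) x
    (fun _ => clamp k ((a - d - \sum_i x i + fc) / (Nr + 1))).
Proof.
apply/(spot_NE_VI beta_gt0); split=> [j|j z hz].
  by rewrite clamp_ge0 ?clamp_le.
set v := (a - d - \sum_i x i + fc) / (Nr + 1).
rewrite /spot_marginal sumr_const_ord.
have -> : alpha - c - beta * (\sum_i x i + Nr * clamp k v + clamp k v - fc)
    = beta * (Nr + 1) * (v - clamp k v).
  by rewrite /v /alpha_x /dC; field; rewrite lt0r_neq0.
by rewrite mulrCA pmulr_rle0 ?clamp_proj // mulr_gt0.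
Qed.

Lemma yspot_sym (fc : R) (x : 'I_M -> R) j :
  yspot alpha beta c k (fun _ : 'I_N => fc) x j
  = clamp k ((a - d - \sum_i x i + fc) / (Nr + 1)).
Proof. exact: (yspot_eq beta_gt0 (spot_NE_sym fc x)). Qed.

Lemma yspot_sym_eq0 (fc xc : R) : a - d - Mr * xc + fc <= 0 ->
  forall j, yspot alpha beta c k (fun _ : 'I_N => fc) (fun _ : 'I_M => xc) j = 0.
Proof. by move=> hK j; rewrite yspot_sym sumr_const_ord clamp_eq0 // ler_pdivrMr ?mul0r. Qed.

Lemma yspot_sym_eq0P (fc xc : R) : (0 < N)%N ->
  (forall j, yspot alpha beta c k (fun _ : 'I_N => fc) (fun _ : 'I_M => xc) j = 0)
  <-> a - d - Mr * xc + fc <= 0.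
Proof.
move=> N0; split=> [/(_ (Ordinal N0))|]; last exact: yspot_sym_eq0.
rewrite yspot_sym sumr_const_ord => /eqP; apply: contraTT; rewrite -ltNge => hK.
by rewrite lt0r_neq0 // clamp_gt0 // divr_gt0.
Qed.

Lemma spot_NE_dev (fc : R) (x : 'I_M -> R) j0 g : a - d - \sum_i x i + fc <= 0 ->
  spot_NE alpha beta c k (upd (fun _ : 'I_N => fc) j0 g) x
    (upd (fun _ => 0) j0 (clamp k ((a - d - \sum_i x i + g) / 2))).
Proof.
move=> hK; set v := (a - d - \sum_i x i + g) / 2.
have t0 : 0 <= clamp k v by rewrite clamp_ge0.
apply/(spot_NE_VI beta_gt0); split=> [j|j z /andP[z0 zk]].
  by rewrite /upd; case: ifP => _; rewrite ?clamp_le ?lexx ?t0.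
rewrite /spot_marginal sumr_upd big1_eq subrr add0r /upd; case: ifP => _.
  have -> : alpha - c - beta * (\sum_i x i + clamp k v + clamp k v - g)
      = beta * 2 * (v - clamp k v) by rewrite /v /alpha_x /dC; field.
  by rewrite mulrCA pmulr_rle0 ?clamp_proj ?z0 // mulr_gt0.
have -> : alpha - c - beta * (\sum_i x i + clamp k v + 0 - fc)
    = beta * (a - d - \sum_i x i + fc - clamp k v) by rewrite /alpha_x /dC; field.
by rewrite subr0 mulr_ge0_le0 // pmulr_rle0 //; lra.
Qed.

Section IdleProfile.
Variables fc xc : R.
Hypothesis idle : a - d - Mr * xc + fc <= 0.

Lemma follower_payoff_idle j :
  follower_payoff alpha beta c k (fun _ : 'I_N => fc) (fun _ : 'I_M => xc) j = 0.
Proof. by rewrite /follower_payoff yspot_sym_eq0 // mulr0. Qed.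

Lemma leader_payoff_idle i :
  leader_payoff alpha beta C c k (fun _ : 'I_N => fc) (fun _ : 'I_M => xc) i
  = beta * (a - Mr * xc) * xc.
Proof.
have Y : \sum_j yspot alpha beta c k (fun _ : 'I_N => fc) (fun _ : 'I_M => xc) j = 0.
  by apply: big1 => j _; exact: yspot_sym_eq0.
by rewrite /leader_payoff price_subC /Defs.total Y sumr_const_ord addr0.
Qed.

Lemma follower_payoff_dev j g :
  follower_payoff alpha beta c k (upd (fun _ : 'I_N => fc) j g) (fun _ : 'I_M => xc) j
  = beta * (a - d - Mr * xc - clamp k ((a - d - Mr * xc + g) / 2))
    * clamp k ((a - d - Mr * xc + g) / 2).
Proof.
have idle' : a - d - \sum_(i < M) (fun _ => xc) i + fc <= 0 by rewrite sumr_const_ord.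
have E := yspot_eq beta_gt0 (spot_NE_dev j g idle').
rewrite /follower_payoff /Defs.total (eq_bigr _ (fun i _ => E i)) E sumr_upd big1_eq.
rewrite subrr add0r /upd eqxx price_subc !sumr_const_ord.
by rewrite opprD addrA.
Qed.

End IdleProfile.

Lemma leader_payoff_dev (fc xc : R) i z :
  leader_payoff alpha beta C c k (fun _ : 'I_N => fc) (upd (fun _ : 'I_M => xc) i z) i
  = beta * (a - (Mr * xc - xc + z)
      - Nr * clamp k ((a - d - (Mr * xc - xc + z) + fc) / (Nr + 1))) * z.
Proof.
rewrite /leader_payoff price_subC /Defs.total.
rewrite (eq_bigr _ (fun j _ => yspot_sym fc _ j)) !sumr_const_ord sumr_upd sumr_const_ord.
by rewrite /upd eqxx opprD addrA.
Qed.

Lemma follower_no_gainP (fc xc : R) : (0 < N)%N -> a - d - Mr * xc + fc <= 0 ->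
  (forall j g, follower_payoff alpha beta c k (upd (fun _ : 'I_N => fc) j g) (fun _ : 'I_M => xc) j
     <= follower_payoff alpha beta c k (fun _ : 'I_N => fc) (fun _ : 'I_M => xc) j)
  <-> a - d - Mr * xc <= 0.
Proof.
move=> N0 idle; split=> [/(_ (Ordinal N0)) hF|hB j g]; last first.
  rewrite follower_payoff_dev // follower_payoff_idle //.
  have : 0 <= clamp k ((a - d - Mr * xc + g) / 2) by rewrite clamp_ge0.
  set t := clamp k _ => t0; have : 0 <= beta * (t - (a - d - Mr * xc)) * t.
    by apply: mulr_ge0 => //; apply: mulr_ge0; [exact: ltW | lra].
  lra.
rewrite leNgt; apply/negP => hB.
pose t := Num.min ((a - d - Mr * xc) / 2) k.
have [t0 t1 t2] : [/\ 0 < t, t <= (a - d - Mr * xc) / 2 & t <= k].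
  by rewrite lt_min k_gt0 ge_min lexx ge_min lexx orbT andbT; split=> //; lra.
have := hF (2 * t - (a - d - Mr * xc)).
rewrite follower_payoff_dev // follower_payoff_idle //.
have -> : (a - d - Mr * xc + (2 * t - (a - d - Mr * xc))) / 2 = t by field.
rewrite clamp_id ?t0 //; have : 0 < beta * (a - d - Mr * xc - t) * t.
  by rewrite !mulr_gt0 //; lra.
lra.
Qed.

Lemma leader_no_gainP (fc xc : R) : (0 < M)%N -> a - d - Mr * xc + fc <= 0 ->
  (forall i z, 0 <= z ->
     leader_payoff alpha beta C c k (fun _ : 'I_N => fc) (upd (fun _ : 'I_M => xc) i z) i
     <= leader_payoff alpha beta C c k (fun _ : 'I_N => fc) (fun _ : 'I_M => xc) i)
  <-> leader_no_gain a d Mr Nr k fc xc.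
Proof.
move=> M0 idle; split=> [/(_ (Ordinal M0)) hL z z0|hL i z z0].
  by have := hL z z0; rewrite leader_payoff_dev leader_payoff_idle // -!mulrA ler_pM2l.
by rewrite leader_payoff_dev leader_payoff_idle // -!mulrA ler_pM2l //; exact: hL.
Qed.

Lemma inQ_idleP (fc xc : R) : (0 < M)%N -> (0 < N)%N ->
  inQ M N alpha beta C c k fc xc /\
    (forall j, yspot alpha beta c k (fun _ : 'I_N => fc) (fun _ : 'I_M => xc) j = 0)
  <-> idle_equilibrium a d Mr Nr k fc xc.
Proof.
move=> M0 N0; rewrite yspot_sym_eq0P //.
split=> [[[x0 [_ [hF hL]]] idle]|[x0 idle hB hL]].
  by split=> //; [exact/(follower_no_gainP N0 idle) | exact/(leader_no_gainP M0 idle)].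
split=> //; split=> //; split=> //.
by split; [exact/(follower_no_gainP N0 idle) | exact/(leader_no_gainP M0 idle)].
Qed.

End SymmetricProfiles.

Theorem lemma5 (R : realType) (M N : nat) (alpha beta C c k : R) :
  (1 <= M)%N -> (2 <= N)%N ->
  0 < alpha -> 0 < beta -> 0 < C -> C <= c -> 0 < k ->
  0 < dC beta C c ->
  ((exists f x : R, inQ M N alpha beta C c k f x /\
      (forall j, @yspot R M N alpha beta c k (fun _ => f) (fun _ => x) j = 0))
    <-> alpha_x alpha beta C <= zeta1 M N beta C c k) /\
  ((M%:R + 1) * dC beta C c < alpha_x alpha beta C ->
   exists fbar : R,
     (forall f x : R, inQ M N alpha beta C c k f x ->
        ((forall j, @yspot R M N alpha beta c k (fun _ => f) (fun _ => x) j = 0) <->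
         (0 <= x /\ x = (alpha_x alpha beta C - (dC beta C c - f)) / M%:R /\
          0 <= f <= fbar))) /\
     (forall f x : R, 0 <= x ->
        x = (alpha_x alpha beta C - (dC beta C c - f)) / M%:R -> 0 <= f <= fbar ->
        inQ M N alpha beta C c k f x) /\
     (alpha_x alpha beta C < zeta1 M N beta C c k -> 0 < fbar)).
Proof.
move=> M0 N2 _ beta_gt0 _ _ k_gt0 d_gt0.
have N0 : (0 < N)%N by apply: ltnW.
have m_gt0 : 0 < M%:R :> R by rewrite ltr0n.
have n_gt0 : 0 < N%:R :> R by rewrite ltr0n.
have idleP f x := inQ_idleP alpha C c beta_gt0 k_gt0 f x M0 N0.
split.
  apply: iff_trans (exists_idle_equilibriumP _ m_gt0 n_gt0 k_gt0 d_gt0).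
  by split=> -[f [x /idleP h]]; exists f, x.
move=> ad; have kinkP f x := idle_equilibriumP f x m_gt0 n_gt0 k_gt0 (ltW d_gt0) ad.
exists (fbar (alpha_x alpha beta C) (dC beta C c) M%:R N%:R k); split; [|split].
- move=> f x hQ; apply: iff_trans (kinkP f x).
  by split=> [hy|/(idleP f x)[]//]; apply/(idleP f x).
- by move=> f x x0 ex hf; case/(idleP f x): ((kinkP f x).2 (conj x0 (conj ex hf))).
- exact: fbar_gt0.
Qed.
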